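(* Let $\mathcal C\subset\mathbb R^n$ be compact with non-empty interior, boundary of Lebesgue measure zero, and $\mathcal C=-\mathcal C$. Put $\mathcal C^+=\mathcal C\cap\{y_n>0\}$, $\mathcal W=\mathrm{pr}(\mathcal C^+)$, $\widetilde{\mathcal C}^+=\{(\delta v',v'',v_n):(v',v'',v_n)\in\mathcal C^+,\ 0\le\delta\le1\}$ and $\widetilde{\mathcal A}_t=\widetilde{\mathcal C}^+\,\mathrm{diag}(e^{-nt}1_k,1_m,1)$ for $t\in\mathbb R$. Then for every $x\in\mathcal X$ for which $\xi_1(x,1)$ exists (i.e. the hitting-time multiset for $\mathcal W$ at $L=1$ is nonempty), $$\lim_{t\to\infty}r_1(x,\mathcal H(\widetilde{\mathcal A}_t))=|\xi_1(x,1)|.$$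
   Context: Fix integers $k\ge1$, $m\ge0$, $n=k+m+1$; $G=\mathrm{SL}(n,\mathbb R)$, $\Gamma=\mathrm{SL}(n,\mathbb Z)$, $\mathcal X=\Gamma\backslash G$. Row vectors $y=(y',y'',y_n)\in\mathbb R^k\times\mathbb R^m\times\mathbb R$, $G$ acting from the right; $\widehat{\mathbb Z}^n$ is the set of primitive integer vectors. $U(s)=\begin{pmatrix}1_k&0&0\\0&1_m&0\\-s&0&1\end{pmatrix}$ for $s\in\mathbb R^k$ (middle block absent if $m=0$), $h_s(x)=xU(s)$. Fix a norm $|\cdot|$ on $\mathbb R^k$. $\mathrm{pr}:\mathbb R^n\to\mathbb R^{m+1}$, $(y_1,\dots,y_n)\mapsto(y_{k+1},\dots,y_n)$. For Borel $\mathcal C\subset\mathbb R^n$, $\mathcal H(\mathcal C)=\{\Gamma g:\widehat{\mathbb Z}^ng\cap\mathcal C\ne\emptyset\}$; for $E\subset\mathcal X$, $r_1(x,E)=\inf\{|s|:h_s(x)\in E\}$. For $\mathcal W\subset\mathbb R^m\times\mathbb R_{>0}$, $x=\Gamma g$ and $L>0$, the hitting times $\xi_1(x,L),\xi_2(x,L),\dots$ list with multiplicity the multiset $\{v'/v_n: v\in\widehat{\mathbb Z}^ng,\ (v'',v_n)\in L^{-1}\mathcal W\}$ in order of nondecreasing $|\cdot|$ (the times at which $h_s(x)$ meets the section $\Gamma\backslash\Gamma H\{R(w):w\in L^{-1}\mathcal W\}$). *)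

From HB Require Import structures.
From mathcomp Require Import all_boot all_order all_algebra.
From mathcomp Require Import all_classical all_reals all_analysis.
Set Implicit Arguments. Unset Strict Implicit. Unset Printing Implicit Defensive.
Import Order.TTheory GRing.Theory Num.Theory.
Import numFieldNormedType.Exports.
Local Open Scope classical_set_scope.
Local Open Scope ring_scope.

(* Coordinates: R^n with n = k + m + 1 is 'rV[R]_((k + m).+1); row vectors,
   matrices act on the right.  Index i < k : the y' block, k <= i < k+m : the
   y'' block, i = k+m (= ord_max) : y_n. *)

Section Defs.
Variable R : realType.
Variables k m : nat.
Notation n := (k + m).+1.
Notation vec := 'rV[R]_n.

Definition vprime (v : vec) : 'rV[R]_k := \row_(i < k) v 0 (inord i).
Definition vmid (v : vec) : 'rV[R]_m := \row_(j < m) v 0 (inord (k + j)).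
Definition vlast (v : vec) : R := v 0 ord_max.

Definition pr (v : vec) : 'rV[R]_m * R := (vmid v, vlast v).

Definition scoord (s : 'rV[R]_k) (j : nat) : R :=
  if (insub j : option 'I_k) is Some i then s 0 i else 0.

Definition Umat (s : 'rV[R]_k) : 'M[R]_n :=
  \matrix_(i, j) ((if i == j then 1 else 0)
     - (if (i == ord_max) && (j < k)%N then scoord s j else 0)).

Definition Dmat (t : R) : 'M[R]_n :=
  \matrix_(i, j) (if i == j then (if (i < k)%N then expR (- (n%:R) * t) else 1)
                  else 0).

Definition scale_first (delta : R) (v : vec) : vec :=
  \row_(j < n) (if (j < k)%N then delta * v 0 j else v 0 j).

Definition is_norm (N : 'rV[R]_k -> R) : Prop :=
  (forall s, 0 <= N s) /\ (forall s, N s = 0 -> s = 0) /\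
  (forall (a : R) s, N (a *: s) = `|a| * N s) /\
  (forall s t, N (s + t) <= N s + N t).

Definition box (a b : vec) : set vec :=
  [set y | forall i, a 0 i <= y 0 i <= b 0 i].
Definition box_vol (a b : vec) : R := \prod_(i < n) (b 0 i - a 0 i).
Definition leb_null (S : set vec) : Prop :=
  forall eps : R, 0 < eps -> exists ab : nat -> vec * vec,
    (forall j i, (ab j).1 0 i <= (ab j).2 0 i) /\
    S `<=` \bigcup_j box (ab j).1 (ab j).2 /\
    (forall N : nat, \sum_(j < N) box_vol (ab j).1 (ab j).2 <= eps).

Definition boundary (S : set vec) : set vec := closure S `\` interior S.

Definition primitive (p : 'rV[int]_n) : Prop :=
  p != 0 /\ forall d : int, (forall i, (d %| p ord0 i)%Z) -> d = 1 \/ d = -1.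

Definition intvec (p : 'rV[int]_n) : vec := map_mx (fun z : int => z%:~R) p.

(* H(C) viewed on representatives g of x = Gamma g:
   \hat Z^n g meets C *)
Definition Hset (C : set vec) (g : 'M[R]_n) : Prop :=
  exists p, primitive p /\ C (intvec p *m g).

(* r_1(Gamma g, H(C)) = inf { |s| : h_s(Gamma g) in H(C) }, in \bar R
   (inf of the empty set is +oo) *)
Definition r1 (N : 'rV[R]_k -> R) (g : 'M[R]_n) (C : set vec) : \bar R :=
  ereal_inf [set (N s)%:E | s in [set s | Hset C (g *m Umat s)]].

Definition Cplus (C : set vec) : set vec := [set v | C v /\ 0 < vlast v].
Definition Wset (C : set vec) : set ('rV[R]_m * R) := pr @` Cplus C.
Definition Ctilde (C : set vec) : set vec :=
  [set w | exists v delta, Cplus C v /\ 0 <= delta <= 1 /\ w = scale_first delta v].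
Definition Atilde (C : set vec) (t : R) : set vec :=
  [set w *m Dmat t | w in Ctilde C].

(* hitting times for W at L = 1:
   { v'/v_n : v in \hat Z^n g, (v'', v_n) in W } (as a set; multiplicity is
   irrelevant for the first hitting time) *)
Definition hits (C : set vec) (g : 'M[R]_n) : set 'rV[R]_k :=
  [set (vlast v)^-1 *: vprime v | v in
     [set v | (exists p, primitive p /\ v = intvec p *m g) /\ Wset C (pr v)]].

Definition first_hit (N : 'rV[R]_k -> R) (C : set vec) (g : 'M[R]_n)
  (xi : 'rV[R]_k) : Prop :=
  hits C g xi /\ forall xi', hits C g xi' -> N xi <= N xi'.

End Defs.

From HB Require Import structures.
From mathcomp Require Import all_boot all_order all_algebra.
From mathcomp Require Import all_classical all_reals all_analysis.
From mathcomp Require Import ring lra.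
Set Implicit Arguments. Unset Strict Implicit. Unset Printing Implicit Defensive.
Import Order.TTheory GRing.Theory Num.Theory.
Import numFieldNormedType.Exports.
Local Open Scope classical_set_scope.
Local Open Scope ring_scope.

(* Taking delta = 0 in tilde A_t shows that U(xi_1) moves the point of
   \hat Z^n g realising xi_1 into tilde A_t for every t, so r_1 <= |xi_1|.
   Conversely, if v U(s) lies in tilde A_t then (v'', v_n) = (w'', w_n) for
   some w in C^+ and v' = v_n s + e^{-nt} delta w', so the hitting time v'/v_n
   differs from s by O(e^{-nt} / v_n).  As long as |s| < |xi_1| the points v
   stay in a fixed bounded region, where discreteness of \hat Z^n g bounds v_n
   from below; hence |s| >= |xi_1| - o(1). *)

Section MatrixNorm.
Variable R : realType.

Lemma mx_entry_le_norm a b (x : 'M[R]_(a, b)) i j : `|x i j| <= `|x|.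
Proof.
rewrite [leRHS]/Num.Def.normr /= mx_normrE; apply/bigmax_geP; right => /=.
by exists (i, j).
Qed.

Lemma mx_norm_le_entries a b (x : 'M[R]_(a, b)) (B : R) :
  0 <= B -> (forall i j, `|x i j| <= B) -> `|x| <= B.
Proof.
move=> B0 H; rewrite [leLHS]/Num.Def.normr /= mx_normrE; apply/bigmax_leP.
by split => // ij _; apply: H.
Qed.

Lemma compact_mx_norm_bounded a b (C : set 'M[R]_(a, b)) :
  compact C -> exists2 B, 0 <= B & forall w, C w -> `|w| <= B.
Proof.
move=> /compact_bounded [M [_ HM]]; exists (`|M| + 1); first by rewrite addr_ge0.
move=> w Cw; apply: (HM (`|M| + 1)) => //.
by apply: le_lt_trans (ler_norm M) _; rewrite ltrDl.
Qed.

End MatrixNorm.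

Section NormEquivalence.
Variables (R : realType) (k : nat) (N : 'rV[R]_k -> R).
Hypothesis hN : is_norm N.

Lemma norm0 : N 0 = 0.
Proof. by case: hN => _ [_ [hZ _]]; rewrite -(scale0r 0) hZ normr0 mul0r. Qed.

Lemma norm_le_mx_norm : exists2 K, 0 <= K & forall s, N s <= K * `|s|.
Proof.
case: hN => h0 [_ [hZ hD]].
exists (\sum_(j < k) N 'e_j); first by apply: sumr_ge0 => j _; apply: h0.
move=> s; rewrite {1}(row_sum_delta s) mulr_suml.
elim/big_rec2: _ => [|j x y _ Hxy]; first by rewrite norm0.
apply: (le_trans (hD _ _)); apply: lerD => //.
by rewrite hZ mulrC ler_wpM2l //; apply: mx_entry_le_norm.
Qed.

Lemma norm_continuous_mx : continuous N.
Proof.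
case: hN => _ [_ [_ hD]]; have [K K0 HK] := norm_le_mx_norm.
have lipN a b : N a - N b <= K * `|a - b|.
  rewrite lerBlDr (le_trans _ (lerD (HK (a - b)) (lexx (N b)))) //.
  by have := hD (a - b) b; rewrite subrK.
move=> x; apply/(@cvgrPdist_le _ _ _ (nbhs x) (nbhs_filter x)) => e e0.
have eK : 0 < e / (K + 1) by rewrite divr_gt0 // ltr_wpDl.
near=> y.
have Hy : `|x - y| <= e / (K + 1)
  by near: y; apply: (@cvgr_dist_le _ _ _ (nbhs x) (nbhs_filter x) id) => //; exact: cvg_id.
have Kxy : K * `|x - y| <= e.
  apply: le_trans (ler_wpM2l K0 Hy) _.
  by rewrite mulrA ler_pdivrMr ?ltr_wpDl // mulrC ler_wpM2l ?(ltW e0) // lerDl.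
rewrite ler_norml (le_trans (lipN x y) Kxy) andbT lerNl opprB.
by apply: le_trans (lipN y x) _; rewrite distrC.
Unshelve. all: by end_near.
Qed.

Hypothesis hk : (1 <= k)%N.

(* c is the minimum of N on the unit sphere of the sup norm. *)
Lemma mx_norm_le_norm : exists2 c, 0 < c & forall s, c * `|s| <= N s.
Proof.
case: hN => h0 [hpos [hZ _]].
pose S := [set s : 'rV[R]_k | `|s| = 1].
have S0 : S !=set0.
  pose e : 'rV[R]_k := 'e_(Ordinal hk).
  have e0 : e != 0.
    apply/negP => /eqP/matrixP/(_ 0 (Ordinal hk)); rewrite !mxE !eqxx /=.
    by move/eqP; rewrite oner_eq0.
  by exists (`|e|^-1 *: e); rewrite /S /= normfZV.
have Sc : compact S.
  apply: bounded_closed_compact.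
    exists 1; split; first by rewrite realE ler01.
    by move=> M M1 s; rewrite /S /= => ->; apply: ltW.
  have -> : S = Num.Def.normr @^-1` [set 1] by [].
  by apply: (continuous_closedP _).1; [exact: norm_continuous | exact: closed_eq].
have [c /set_mem Sc' Hc] :=
  compact_EVT_min S0 Sc (continuous_subspaceT norm_continuous_mx).
exists (N c).
  rewrite lt_def h0 andbT; apply/eqP => /hpos c0.
  by move: Sc'; rewrite /S /= c0 normr0 => /esym/eqP; rewrite oner_eq0.
move=> s; have [->|s0] := eqVneq s 0; first by rewrite normr0 mulr0.
have := Hc (`|s|^-1 *: s) (mem_set (normfZV s0)).
by rewrite hZ normfV normr_id => H; rewrite mulrC -ler_pdivlMl ?normr_gt0.
Qed.

End NormEquivalence.

Section LatticeGap.
Variables (R : realType) (n : nat) (g : 'M[R]_n).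
Hypothesis g_unit : g \in unitmx.

Local Notation intr_mx p := (map_mx (fun z : int => z%:~R) p).

Lemma lattice_coords_bounded (B : R) : exists M : nat,
  forall p : 'rV[int]_n, (forall j, `|(intr_mx p *m g) 0 j| <= B) ->
  forall i, (`|p ord0 i| < M)%N.
Proof.
pose M0 : R := n%:R * `|B| * `|invmx g|.
have M00 : 0 <= M0 by rewrite !mulr_ge0.
exists (Num.Def.archi_bound M0) => p Hp i.
have : `|(intr_mx p) 0 i| <= M0.
  rewrite -[intr_mx p](mulmxK g_unit) mxE.
  apply: le_trans (ler_norm_sum _ _ _) _.
  apply: (@le_trans _ _ (\sum_(j < n) `|B| * `|invmx g|)).
    apply: ler_sum => j _; rewrite normrM; apply: ler_pM => //.
      exact: le_trans (Hp j) (ler_norm B).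
    exact: mx_entry_le_norm.
  by rewrite sumr_const card_ord /M0 -mulrA mulr_natl.
rewrite mxE -intr_norm -natr_absz -(ltr_nat R) => H.
exact: le_lt_trans H (archi_boundP M00).
Qed.

(* Only finitely many lattice points lie in a bounded region, so a positive
   coordinate is bounded below by the least of finitely many positive values. *)
Lemma lattice_coord_gap (B : R) (j0 : 'I_n) : exists2 c0 : R, 0 < c0 &
  forall p : 'rV[int]_n, (forall j, `|(intr_mx p *m g) 0 j| <= B) ->
  0 < (intr_mx p *m g) 0 j0 -> c0 <= (intr_mx p *m g) 0 j0.
Proof.
have [M HM] := lattice_coords_bounded B.
pose F (q : {ffun 'I_n -> 'I_M * bool}) : 'rV[int]_n :=
  \row_i ((-1) ^+ (q i).2 * ((q i).1 : nat)%:Z).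
pose coord q := (intr_mx (F q) *m g) 0 j0.
exists (\big[Order.min/1]_(q | 0 < coord q) coord q).
  by elim/big_ind: _ => //= x y hx hy; rewrite lt_min hx hy.
move=> p Hp Hpos; have Hb := HM p Hp.
pose q := [ffun i => (Ordinal (Hb i), p 0 i < 0)].
have Fq : F q = p by apply/rowP => i; rewrite mxE ffunE /= [RHS]intEsign.
have -> : (intr_mx p *m g) 0 j0 = coord q by rewrite /coord Fq.
by apply: bigmin_le_cond; rewrite /coord Fq.
Qed.

End LatticeGap.

Section Coordinates.
Variables (R : realType) (k m : nat).
Local Notation n := (k + m).+1.

Lemma scoord_lt (s : 'rV[R]_k) (j : nat) (jk : (j < k)%N) :
  scoord s j = s 0 (Ordinal jk).
Proof. by rewrite /scoord insubT //= => jk'; congr (s 0 _); apply/val_inj. Qed.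

Lemma mulmx_Umat_entry (v : 'rV[R]_n) (s : 'rV[R]_k) (j : 'I_n) :
  (v *m Umat m s) 0 j = v 0 j - (if (j < k)%N then vlast v * scoord s j else 0).
Proof.
pose E : 'M[R]_n :=
  \matrix_(i, j) (if (i == ord_max) && (j < k)%N then scoord s j else 0).
have -> : Umat m s = 1%:M - E by apply/matrixP => i l; rewrite !mxE; case: eqP.
rewrite mulmxBr mulmx1 !mxE; congr (_ - _).
rewrite (bigD1 ord_max) //= big1 => [|i /negbTE ni]; last by rewrite mxE ni mulr0.
by rewrite mxE eqxx /=; case: ifP; rewrite ?mulr0 ?addr0.
Qed.

Lemma mulmx_Dmat_entry (w : 'rV[R]_n) (t : R) (j : 'I_n) :
  (w *m Dmat k m t) 0 j = w 0 j * (if (j < k)%N then expR (- (n%:R) * t) else 1).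
Proof.
rewrite mxE (bigD1 j) //= big1 => [|i /negbTE ni]; last by rewrite mxE ni mulr0.
by rewrite mxE eqxx addr0.
Qed.

Lemma vprime_entry (v : 'rV[R]_n) (j : 'I_n) (jk : (j < k)%N) :
  v 0 j = vprime v 0 (Ordinal jk).
Proof. by rewrite mxE; congr (v 0 _); apply/val_inj; rewrite /= inordK. Qed.

Lemma pr_eqP (v w : 'rV[R]_n) :
  pr v = pr w <-> forall j : 'I_n, (k <= j)%N -> v 0 j = w 0 j.
Proof.
split=> [[hmid hlast] j kj|H].
  have [->|jnm] := eqVneq j ord_max; first exact: hlast.
  have jm : (j - k < m)%N.
    rewrite ltn_subLR //; have := ltn_ord j; rewrite ltnS leq_eqVlt.
    by case/orP => // /eqP jm; case/eqP: jnm; apply: val_inj.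
  have := congr1 (fun r : 'rV[R]_m => r 0 (Ordinal jm)) hmid; rewrite /= !mxE.
  by have -> : inord (k + (j - k)) = j by apply/val_inj; rewrite /= subnKC // inordK.
congr (_, _); last by apply: H; rewrite /= leq_addr.
apply/rowP => i; rewrite !mxE; apply: H.
by rewrite inordK ?leq_addr // ltnS leq_add2l ltnW.
Qed.

Lemma Umat_Dmat_decomposition (v w : 'rV[R]_n) (s : 'rV[R]_k) (del t : R) :
  scale_first del w *m Dmat k m t = v *m Umat m s ->
  pr v = pr w /\
  vprime v = vlast v *: s + (expR (- (n%:R) * t) * del) *: vprime w.
Proof.
move=> E.
have Ej j : (scale_first del w *m Dmat k m t) 0 j = (v *m Umat m s) 0 j
  by rewrite E.
split.
  apply/pr_eqP => j kj; have := Ej j.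
  by rewrite mulmx_Dmat_entry mulmx_Umat_entry mxE ltnNge kj /= mulr1 subr0.
apply/rowP => i; have ik : (i < n)%N by rewrite ltnS (leq_trans (ltnW (ltn_ord i))) ?leq_addr.
have := Ej (inord i).
rewrite mulmx_Dmat_entry mulmx_Umat_entry mxE inordK // ltn_ord.
rewrite (scoord_lt _ (ltn_ord i)) !mxE.
have -> : Ordinal (ltn_ord i) = i by apply/val_inj.
by move=> h; rewrite -(subrK (vlast v * s 0 i) (v 0 (inord i))) -h; ring.
Qed.

Lemma decomposition_entry_le (v w : 'rV[R]_n) (s : 'rV[R]_k) (a B S : R) :
  0 <= a <= 1 -> 0 <= B -> `|w| <= B -> `|s| <= S ->
  pr v = pr w -> vprime v = vlast v *: s + a *: vprime w ->
  forall j, `|v 0 j| <= B * S + B.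
Proof.
move=> /andP[a0 a1] B0 wB sS /pr_eqP vw Hv j.
have wjB i : `|w 0 i| <= B := le_trans (mx_entry_le_norm _ _ _) wB.
have S0 : 0 <= S := le_trans (normr_ge0 _) sS.
case: (ltnP j k) => jk; last first.
  by rewrite vw // (le_trans (wjB j)) // lerDr mulr_ge0.
rewrite vprime_entry Hv !mxE; apply: le_trans (ler_normD _ _) _.
rewrite !normrM; apply: lerD; last first.
  by rewrite -[B]mul1r ler_pM // ger0_norm.
apply: ler_pM => //; last exact: le_trans (mx_entry_le_norm _ _ _) sS.
by rewrite /vlast vw /= ?leq_addr.
Qed.

Lemma norm_vprime_le (w : 'rV[R]_n) : `|vprime w| <= `|w|.
Proof.
apply: mx_norm_le_entries => // i j.
by rewrite !mxE; apply: mx_entry_le_norm.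
Qed.

Lemma norm_hit_le (N : 'rV[R]_k -> R) (hN : is_norm N)
  (v w : 'rV[R]_n) (s : 'rV[R]_k) (a : R) :
  0 < vlast v -> 0 <= a -> vprime v = vlast v *: s + a *: vprime w ->
  N ((vlast v)^-1 *: vprime v) <= N s + a / vlast v * N (vprime w).
Proof.
case: hN => _ [_ [hZ hD]] vn0 a0 ->.
rewrite scalerDr !scalerA mulVf ?gt_eqF // scale1r [_ * a]mulrC.
by rewrite (le_trans (hD _ _)) // hZ ger0_norm // divr_ge0 // ltW.
Qed.

End Coordinates.

Lemma expR_near_pinfty_le (R : realType) (a e : R) : 0 < a -> 0 < e ->
  \forall t \near +oo, expR (- a * t) <= e.
Proof.
move=> a0 e0; near=> t.
rewrite -[leRHS]lnK ?posrE // ler_expR mulNr lerNl -(ler_pdivrMl _ _ a0).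
by near: t; apply: nbhs_pinfty_ge; rewrite num_real.
Unshelve. all: by end_near.
Qed.

Lemma ereal_cvg_from_bounds (R : realType) (T : Type) (F : set_system T)
  {FF : Filter F} (f : T -> \bar R) (a : R) :
  (forall t, (f t <= a%:E)%E) ->
  (forall e, 0 < e -> \forall t \near F, ((a - e)%:E <= f t)%E) ->
  f @ F --> a%:E.
Proof.
move=> fa near_a; apply/fine_cvgP; split.
  by apply: filterS (near_a 1 ltr01) => t; move: (fa t); case: (f t).
apply/cvgrPdist_le => e e0; apply: filterS (near_a e e0) => t /=; move: (fa t).
case: (f t) => //= r; rewrite !lee_fin => h1 h2.
by rewrite ger0_norm ?subr_ge0 //; lra.
Qed.

Lemma perturbation_le (R : realFieldType) (eps c1 M a x y : R) :
  0 < eps -> 0 < c1 -> 0 <= M -> 0 <= a <= eps * c1 / (M + 1) -> c1 <= x ->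
  0 <= y <= M -> a / x * y <= eps.
Proof.
move=> eps0 c10 M0 /andP[a0 aeps] c1x /andP[y0 yM].
have M1 : 0 < M + 1 by rewrite ltr_wpDl.
have x0 : 0 < x := lt_le_trans c10 c1x.
apply: (@le_trans _ _ (eps * c1 / (M + 1) / c1 * M)).
  apply: ler_pM => //; first by rewrite divr_ge0 // ltW.
  by apply: ler_pM => //; rewrite ?invr_ge0 ?lef_pV2 ?posrE // ltW.
have -> : eps * c1 / (M + 1) / c1 * M = eps * (M / (M + 1)).
  by field; rewrite ?gt_eqF.
by rewrite ler_piMr ?(ltW eps0) // ler_pdivrMr // mul1r lerDl.
Qed.

Section HittingTime.
Variables (R : realType) (k m : nat) (N : 'rV[R]_k -> R).
Variables (C : set 'rV[R]_((k + m).+1)) (g : 'M[R]_((k + m).+1)).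
Variable xi : 'rV[R]_k.
Hypothesis hxi : first_hit N C g xi.

Lemma r1_Atilde_le (t : R) : (r1 N g (Atilde C t) <= (N xi)%:E)%E.
Proof.
apply: ereal_inf_lbound; exists xi => //.
case: hxi => -[v [[p [pp ->]] [w wC wv]] <-] _.
have vl : 0 < vlast (intvec R p *m g) by rewrite -[vlast _]/(pr _).2 -wv; case: wC.
exists p; split => //; exists (scale_first 0 w).
  by exists w, 0; rewrite lexx ler01.
apply/rowP => j; rewrite mulmx_Dmat_entry mulmxA mulmx_Umat_entry mxE.
case: ifP => jk; last first.
  by rewrite subr0 mulr1; apply/esym/(pr_eqP _ _).1 => //; rewrite leqNgt jk.
rewrite !mul0r (scoord_lt _ jk) !mxE.
have -> : inord (Ordinal jk) = j :> 'I_(k + m).+1 by apply/val_inj; rewrite /= inordK.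
by rewrite mulrA mulfV ?gt_eqF // mul1r subrr.
Qed.

Hypotheses (hk : (1 <= k)%N) (hN : is_norm N) (hCc : compact C).
Hypothesis hg : \det g = 1.

Lemma r1_Atilde_ge_near (eps : R) : 0 < eps ->
  \forall t \near +oo, ((N xi - eps)%:E <= r1 N g (Atilde C t))%E.
Proof.
move=> eps0; have [K K0 HK] := norm_le_mx_norm hN.
have [c c0 Hc] := mx_norm_le_norm hN hk.
have [B B0 HB] := compact_mx_norm_bounded hCc.
have g_unit : g \in unitmx by rewrite unitmxE hg unitr1.
have [c1 c10 Hc1] := lattice_coord_gap g_unit (B * (N xi / c) + B) ord_max.
have KB0 : 0 <= K * B by rewrite mulr_ge0.
pose eta0 := eps * c1 / (K * B + 1).
have eta00 : 0 < eta0 by rewrite !divr_gt0 ?mulr_gt0 ?ltr_wpDl.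
have n0 : 0 < ((k + m).+1)%:R :> R by rewrite ltr0n.
near=> t; pose eta := expR (- ((k + m).+1)%:R * t).
have eta_ge0 : 0 <= eta by exact: expR_ge0.
have eta1 : eta <= 1 by rewrite /eta; near: t; exact: expR_near_pinfty_le.
have eta_small : eta <= eta0 by rewrite /eta; near: t; exact: expR_near_pinfty_le.
apply/ereal_infP => _ [s [p [pp [_ [w [del [wC [del01 ->]]]] E]]] <-].
rewrite lee_fin; rewrite mulmxA in E.
have [vw Hv] := Umat_Dmat_decomposition E.
set v := intvec R p *m g in vw Hv.
have [XNs|NsX] := leP (N xi) (N s).
  by rewrite lerBlDr (le_trans XNs) // lerDl ltW.
have sB : `|s| <= N xi / c by rewrite ler_pdivlMr // mulrC (le_trans (Hc s)) ?ltW.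
have vn0 : 0 < vlast v by rewrite -[vlast v]/(pr v).2 vw; case: wC.
have [d0 d1] := andP del01.
have a01 : 0 <= eta * del <= 1 by rewrite mulr_ge0 // mulr_ile1.
have a_small : 0 <= eta * del <= eta0.
  by rewrite mulr_ge0 // (le_trans _ eta_small) // ler_piMr.
have vB := decomposition_entry_le a01 B0 (HB _ wC.1) sB vw Hv.
have c1v : c1 <= vlast v := Hc1 p vB vn0.
have hit : hits C g ((vlast v)^-1 *: vprime v).
  by exists v => //; split; [exists p | exists w].
have NwB : 0 <= N (vprime w) <= K * B.
  have [h0 _] := hN.
  by rewrite h0 (le_trans (HK _)) // ler_wpM2l // (le_trans (norm_vprime_le _) (HB _ wC.1)).
have := le_trans (hxi.2 _ hit) (norm_hit_le hN vn0 (mulr_ge0 eta_ge0 d0) Hv).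
have := perturbation_le eps0 c10 KB0 a_small c1v NwB.
lra.
Unshelve. all: by end_near.
Qed.

End HittingTime.

Theorem lemma2 (R : realType) (k m : nat) (hk : (1 <= k)%N)
  (N : 'rV[R]_k -> R) (hN : is_norm N)
  (C : set 'rV[R]_((k + m).+1))
  (hCc : compact C) (hCi : interior C !=set0)
  (hCb : leb_null (boundary C))
  (hCs : [set - y | y in C] = C)
  (g : 'M[R]_((k + m).+1)) (hg : \det g = 1)
  (xi : 'rV[R]_k) (hxi : first_hit N C g xi) :
  (fun t : R => r1 N g (Atilde C t)) @ +oo%R --> ((N xi)%:E : \bar R).
Proof.
apply: ereal_cvg_from_bounds; first exact: r1_Atilde_le.
exact: r1_Atilde_ge_near.
Qed.
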